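(* Let $M$ be a pointed metric space such that the set $M'$ of cluster (accumulation) points of $M$ is infinite, and let $X$ be a non-zero Banach space. Then $\mathrm{Lip}_0(M,X)$ has the symmetric strong diameter two property.
   Context: All Banach spaces are real. $\mathrm{Lip}_0(M,X)$ is the Banach space of Lipschitz maps $M\to X$ vanishing at the base point, normed by the best Lipschitz constant. A slice of $B_Z$ is a set $\{z\in B_Z: f(z)>1-\alpha\}$ with $f\in Z^*$, $\alpha>0$. A Banach space $Z$ has the symmetric strong diameter two property (SSD2P) if for every $k\in\mathbb N$, every family of slices $S_1,\dots,S_k$ of $B_Z$ and every $\varepsilon>0$ there exist $x_i\in S_i$ ($1\le i\le k$) and $\varphi\in B_Z$ with $\|\varphi\|>1-\varepsilon$ such that $x_i\pm\varphi\in S_i$ for every $i\in\{1,\dots,k\}$. *)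

From HB Require Import structures.
From mathcomp Require Import all_boot all_order all_algebra.
From mathcomp Require Import all_classical all_reals all_analysis.
Set Implicit Arguments. Unset Strict Implicit. Unset Printing Implicit Defensive.
Import Order.TTheory GRing.Theory Num.Theory.
Import numFieldNormedType.Exports.
Local Open Scope classical_set_scope.
Local Open Scope ring_scope.

(* ---------- Abstract normed space given as a subspace S of a vector space V
   with norm N (used for Z = Lip_0(M,X) inside M -> X). ---------- *)
Section NormedSub.
Context {R : realType} {V : lmodType R} (S : set V) (N : V -> R).

Definition sub_ball : set V := [set z | S z /\ N z <= 1].

(* continuous linear functionals on Z (values outside S are irrelevant) *)
Definition sub_dual (f : V -> R) : Prop :=
  (forall a b u v, S u -> S v -> f (a *: u + b *: v) = a * f u + b * f v) /\
  (exists C, forall z, S z -> `|f z| <= C * N z).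

Definition sub_dual_norm (f : V -> R) : R := sup [set `|f z| | z in sub_ball].

Definition slice (f : V -> R) (alpha : R) : set V :=
  [set z | sub_ball z /\ 1 - alpha < f z].

Definition SSD2P : Prop :=
  forall (k : nat) (f : 'I_k -> V -> R) (alpha : 'I_k -> R) (eps : R),
    (forall i, sub_dual (f i) /\ sub_dual_norm (f i) = 1) ->
    (forall i, 0 < alpha i) -> 0 < eps ->
    exists (x : 'I_k -> V) (phi : V),
      [/\ forall i, slice (f i) (alpha i) (x i),
          sub_ball phi, 1 - eps < N phi &
          forall i, slice (f i) (alpha i) (x i + phi) /\
                    slice (f i) (alpha i) (x i - phi)].
End NormedSub.

Section Lip.
Context {R : realType} {M : metricType R} {X : normedModType R}.

Definition lipschitz_map (f : M -> X) : Prop :=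
  exists L : R, forall x y, `|f x - f y| <= L * mdist x y.

Definition Lip0 (x0 : M) : set (M -> X) :=
  [set f | lipschitz_map f /\ f x0 = 0].

Definition lip_norm (f : M -> X) : R :=
  sup [set `|f xy.1 - f xy.2| / mdist xy.1 xy.2 | xy in [set xy : M * M | xy.1 != xy.2]].
End Lip.

Definition cluster_points {R : realType} (M : metricType R) : set M :=
  [set x | forall e : R, 0 < e -> exists y : M, y != x /\ mdist x y < e].
Arguments cluster_points {R} M.

(* Pick norm-one functionals f_i with their slices, points y_i deep in the
   slices, and a unit vector e of X.  Near a cluster point t of M we flatten
   each y_i to x_i = (1 - del) ((1 - rho) y_i + rho y_i(t)); with a cut-off
   rho that is logarithmic in d(t, .), x_i is (1 - del/2)-Lipschitz and
   constant on a small ball around t.  Hence x_i +- phi stays in the unit ball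
   for the tent phi = max(0, s - d(t, .)) e supported in that ball, and phi has
   norm one because t is not isolated.  Perturbations placed at separated
   points have disjoint supports, so any functional is summable over them;
   among enough separated cluster points one is therefore almost invisible to
   every f_i, and there x_i, x_i +- phi lie in the slices. *)

From HB Require Import structures.
From mathcomp Require Import all_boot all_order all_algebra.
From mathcomp Require Import all_classical all_reals all_analysis.
From mathcomp Require Import ring lra.
Set Implicit Arguments.
Unset Strict Implicit.
Unset Printing Implicit Defensive.
Import Order.TTheory GRing.Theory Num.Theory.
Import numFieldNormedType.Exports.
Local Open Scope classical_set_scope.
Local Open Scope ring_scope.

Section LipNorm.
Context {R : realType} {M : metricType R} {X : normedModType R}.
Implicit Types (f g : M -> X) (L : R).

Definition lip_ratios f : set R :=
  [set `|f xy.1 - f xy.2| / mdist xy.1 xy.2 | xy in [set xy : M * M | xy.1 != xy.2]].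

Lemma lip_ratios_ub f L : (forall x y, `|f x - f y| <= L * mdist x y) ->
  ubound (lip_ratios f) L.
Proof.
move=> fL r [[x y] /= xy <-].
by rewrite ler_pdivrMr ?mdist_gt0.
Qed.

Lemma lip_ratios_empty f : ~ (lip_ratios f !=set0) -> lip_norm f = 0.
Proof.
move=> empty; rewrite /lip_norm -/(lip_ratios f).
suff -> : lip_ratios f = set0 by rewrite sup0.
by apply/seteqP; split => // r fr; apply: empty; exists r.
Qed.

Lemma lip_norm_le f L : (forall x y, `|f x - f y| <= L * mdist x y) -> 0 <= L ->
  lip_norm f <= L.
Proof.
move=> fL L_ge0; have [ne|empty] := pselect (lip_ratios f !=set0).
  by apply: ge_sup => //; exact: lip_ratios_ub.
by rewrite lip_ratios_empty.
Qed.

Lemma lip_norm_ge0 f : lipschitz_map f -> 0 <= lip_norm f.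
Proof.
move=> [L fL]; have [[r fr]|empty] := pselect (lip_ratios f !=set0).
  apply: le_trans (ub_le_sup _ fr); last by exists L; apply: lip_ratios_ub.
  by case: fr => xy _ <-; rewrite divr_ge0 // mdist_ge0.
by rewrite lip_ratios_empty.
Qed.

Lemma lip_norm_dist f x y : lipschitz_map f ->
  `|f x - f y| <= lip_norm f * mdist x y.
Proof.
move=> [L fL]; have [->|xy] := eqVneq x y.
  by rewrite subrr normr0 mdistxx mulr0.
rewrite -ler_pdivrMr ?mdist_gt0 //.
by apply: ub_le_sup; [exists L; apply: lip_ratios_ub | exists (x, y)].
Qed.

Lemma lip_ratio_le_norm f x y : lipschitz_map f -> x != y ->
  `|f x - f y| / mdist x y <= lip_norm f.
Proof. by move=> fL xy; rewrite ler_pdivrMr ?mdist_gt0 // lip_norm_dist. Qed.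

Variable x0 : M.
Local Notation Z := (Lip0 (X := X) x0).
Local Notation ball := (sub_ball Z lip_norm).

Lemma Lip0_0 : Z 0.
Proof. by split => //; exists 0 => x y /=; rewrite subrr normr0 mul0r. Qed.

Lemma Lip0_lin a b f g : Z f -> Z g -> Z (a *: f + b *: g).
Proof.
move=> [[Lf fL] f0] [[Lg gL] g0]; split; last first.
  by change (a *: f x0 + b *: g x0 = 0); rewrite f0 g0 !scaler0 addr0.
exists (`|a| * Lf + `|b| * Lg) => x y.
change (`|a *: f x + b *: g x - (a *: f y + b *: g y)| <=
        (`|a| * Lf + `|b| * Lg) * mdist x y).
rewrite opprD addrACA -!scalerBr mulrDl.
apply: le_trans (ler_normD _ _) _; apply: lerD;
  by rewrite normrZ -mulrA ler_wpM2l.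
Qed.

Lemma Lip0_sum (I : Type) (s : seq I) (c : I -> R) (g : I -> M -> X) :
  (forall n, Z (g n)) -> Z (\sum_(n <- s) c n *: g n).
Proof.
move=> Zg; elim: s => [|n s Zs]; first by rewrite big_nil; exact: Lip0_0.
by rewrite big_cons -[X in _ + X]scale1r; apply: Lip0_lin.
Qed.

Lemma ball_lip1 g : ball g -> forall x y, `|g x - g y| <= mdist x y.
Proof.
move=> [[gL _] g1] x y; apply: le_trans (lip_norm_dist x y gL) _.
exact: ler_piMl (mdist_ge0 x y) g1.
Qed.

Lemma lip1_ball g : Z g -> (forall x y, `|g x - g y| <= mdist x y) -> ball g.
Proof.
move=> Zg g1; split => //; apply: lip_norm_le => [x y|//].
by rewrite mul1r.
Qed.

Lemma ball0 : ball 0.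
Proof.
by apply: lip1_ball Lip0_0 _ => x y; rewrite subrr normr0 mdist_ge0.
Qed.

Lemma ballN g : ball g -> ball ((-1) *: g).
Proof.
move=> g_ball; have := Lip0_lin (-1) 0 g_ball.1 g_ball.1.
rewrite scale0r addr0 => Zg; apply: lip1_ball Zg _ => x y /=.
by rewrite !scaleN1r -opprD normrN ball_lip1.
Qed.

End LipNorm.

Section DisjointSupports.
Context {R : realType} {M : metricType R} {X : normedModType R}.
Variables (K : nat) (t : 'I_K -> M) (r L : R) (g : 'I_K -> M -> X).
Hypotheses (L_ge0 : 0 <= L)
  (t_sep : forall n m, n != m -> 2 * r <= mdist (t n) (t m))
  (g_supp : forall n z, r <= mdist (t n) z -> g n z = 0)
  (g_lip : forall n a b, `|g n a - g n b| <= L * mdist a b).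

Lemma disjoint_sum_at n z : mdist (t n) z < r ->
  forall c : 'I_K -> R, \sum_m c m *: g m z = c n *: g n z.
Proof.
move=> tz c; rewrite (bigD1 n) //= big1 ?addr0 // => m mn.
rewrite g_supp ?scaler0 // leNgt; apply/negP => tmz.
have := t_sep mn; rewrite leNgt => /negP; apply.
apply: le_lt_trans (metric_triangle _ z _) _.
rewrite [mdist z _]metric_sym; have := ltrD tmz tz; lra.
Qed.

Lemma disjoint_sum_lip (c : 'I_K -> R) : (forall n, `|c n| <= 1) ->
  forall a b, `|(\sum_n c n *: g n) a - (\sum_n c n *: g n) b| <= 2 * L * mdist a b.
Proof.
move=> c1 a b; rewrite !fct_sumE.
have one_sided z w : ~ (exists n, mdist (t n) z < r /\ mdist (t n) w < r) ->
    `|\sum_m c m *: g m z| <= L * mdist z w.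
  move=> apart; have [[n tz]|far] := pselect (exists n, mdist (t n) z < r).
    rewrite (disjoint_sum_at tz) normrZ.
    have gw : g n w = 0.
      by apply: g_supp; rewrite leNgt; apply/negP => tw; apply: apart; exists n.
    apply: le_trans (g_lip n z w); rewrite gw subr0.
    exact: ler_piMl.
  rewrite big1 ?normr0 ?mulr_ge0 ?mdist_ge0 // => n _.
  by rewrite g_supp ?scaler0 // leNgt; apply/negP => tz; apply: far; exists n.
have [[n [ta tb]]|apart] :=
  pselect (exists n, mdist (t n) a < r /\ mdist (t n) b < r).
  rewrite (disjoint_sum_at ta) (disjoint_sum_at tb) -scalerBr normrZ.
  apply: le_trans (ler_piMl (normr_ge0 _) (c1 n)) _.
  apply: le_trans (g_lip n a b) _; rewrite -mulrA.
  by apply: ler_peMl; rewrite ?mulr_ge0 ?mdist_ge0 ?ler1n.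
apply: le_trans (ler_normB _ _) _.
rewrite mulr2n !mulrDl mul1r; apply: lerD; first exact: one_sided.
by rewrite metric_sym; apply: one_sided => -[n [tb ta]]; apply: apart; exists n.
Qed.

End DisjointSupports.

Section DualFunctional.
Context {R : realType} {M : metricType R} {X : normedModType R} (x0 : M).
Local Notation Z := (Lip0 (X := X) x0).
Local Notation ball := (sub_ball Z lip_norm).
Variable f : (M -> X) -> R.
Hypothesis f_dual : sub_dual Z lip_norm f.

Lemma dual0 : f 0 = 0.
Proof.
have := f_dual.1 0 0 0 0 (Lip0_0 x0) (Lip0_0 x0).
by rewrite !scaler0 addr0 !mul0r addr0.
Qed.

Lemma dual_sum (I : Type) (s : seq I) (c : I -> R) (g : I -> M -> X) :
  (forall n, Z (g n)) -> f (\sum_(n <- s) c n *: g n) = \sum_(n <- s) c n * f (g n).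
Proof.
move=> Zg; elim: s => [|n s IHs]; first by rewrite !big_nil dual0.
rewrite !big_cons -[X in _ + X]scale1r f_dual.1 //; last exact: Lip0_sum.
by rewrite IHs mul1r.
Qed.

Lemma dual_le_norm z : ball z -> f z <= sub_dual_norm Z lip_norm f.
Proof.
move=> z_ball; have [_ [C fC]] := f_dual.
apply: le_trans (ler_norm _) _; apply: ub_le_sup; last by exists z.
exists `|C| => _ [w [Zw w1] <-]; apply: le_trans (fC w Zw) _.
have w_ge0 : 0 <= lip_norm w by apply: lip_norm_ge0; case: Zw.
apply: le_trans (ler_wpM2r w_ge0 (ler_norm C)) _.
by rewrite ler_piMr.
Qed.

Lemma dual_norming a : sub_dual_norm Z lip_norm f = 1 -> 0 < a ->
  exists y, ball y /\ 1 - a < f y.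
Proof.
move=> f1 a_gt0.
have ne : [set `|f z| | z in ball] !=set0 by exists `|f 0|, 0; first exact: ball0.
have : 1 - a < sub_dual_norm Z lip_norm f by rewrite f1 ltrBlDr ltrDl.
move=> /(sup_gt ne) [_ [z z_ball <-] fz].
have [fz_ge0|fz_lt0] := leP 0 (f z).
  by exists z; rewrite -(ger0_norm fz_ge0).
exists ((-1) *: z); split; first exact: ballN.
have := f_dual.1 (-1) 0 z z z_ball.1 z_ball.1.
by rewrite scale0r addr0 mul0r addr0 mulN1r => ->; rewrite -(ltr0_norm fz_lt0).
Qed.

(* Choosing the signs c n := sg (f (g n)) turns the sum of the |f (g n)| into
   the value of f at a single function of norm at most B. *)
Lemma dual_sum_abs_le : exists C, 0 <= C /\ forall K (g : 'I_K -> M -> X) B,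
  (forall n, Z (g n)) ->
  (forall c : 'I_K -> R, (forall n, `|c n| <= 1) -> lip_norm (\sum_n c n *: g n) <= B) ->
  \sum_n `|f (g n)| <= C * B.
Proof.
have [_ [C fC]] := f_dual; exists `|C|; split => // K g B Zg gB.
pose c n := Num.sg (f (g n)).
have Zsum : Z (\sum_n c n *: g n) by apply: Lip0_sum.
have -> : \sum_n `|f (g n)| = f (\sum_n c n *: g n).
  by rewrite dual_sum //; apply: eq_bigr => n _; rewrite normrEsg.
have sum_ge0 : 0 <= lip_norm (\sum_n c n *: g n) by apply: lip_norm_ge0; case: Zsum.
apply: le_trans (ler_norm _) _; apply: le_trans (fC _ Zsum) _.
apply: le_trans (ler_wpM2r sum_ge0 (ler_norm C)) _; apply: ler_wpM2l => //.
by apply: gB => n; rewrite normr_sg; case: (_ != 0).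
Qed.

Lemma dual_disjoint_sum_le : exists C, 0 <= C /\
  forall K (t : 'I_K -> M) r L (g : 'I_K -> M -> X), 0 <= L ->
  (forall n m, n != m -> 2 * r <= mdist (t n) (t m)) ->
  (forall n z, r <= mdist (t n) z -> g n z = 0) ->
  (forall n a b, `|g n a - g n b| <= L * mdist a b) ->
  (forall n, Z (g n)) ->
  \sum_n `|f (g n)| <= C * (2 * L).
Proof.
have [C [C_ge0 fC]] := dual_sum_abs_le; exists C; split => // K t r L g.
move=> L_ge0 t_sep g_supp g_lip Zg.
apply: fC => // c c1; apply: lip_norm_le; last by rewrite mulr_ge0.
move=> a b; exact: (disjoint_sum_lip L_ge0 t_sep g_supp g_lip c1).
Qed.

End DualFunctional.

Section RealFacts.
Context {R : realType}.

(* The truncation of [v] to [0, 1], written so that it is visibly 1-Lipschitz. *)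
Definition clamp01 (v : R) := (`|v| - `|v - 1| + 1) / 2.

Lemma clamp01_bound (v : R) : -1 <= `|v| - `|v - 1| <= 1.
Proof.
have := ler_dist_dist v (v - 1).
by rewrite opprB addrCA subrr addr0 normr1 ler_norml.
Qed.

Lemma clamp01_ge0 v : 0 <= clamp01 v.
Proof. by have /andP[] := clamp01_bound v; rewrite /clamp01; lra. Qed.

Lemma clamp01_le1 v : clamp01 v <= 1.
Proof. by have /andP[] := clamp01_bound v; rewrite /clamp01; lra. Qed.

Lemma clamp01_ge1 v : 1 <= v -> clamp01 v = 1.
Proof. by move=> v_ge1; rewrite /clamp01 !ger0_norm; lra. Qed.

Lemma clamp01_le0 v : v <= 0 -> clamp01 v = 0.
Proof. by move=> v_le0; rewrite /clamp01 !ler0_norm; lra. Qed.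

Lemma clamp01_lip (u v : R) : `|clamp01 u - clamp01 v| <= `|u - v|.
Proof.
have -> : clamp01 u - clamp01 v = ((`|u| - `|v|) - (`|u - 1| - `|v - 1|)) / 2.
  by rewrite /clamp01; field.
rewrite normrM [`|2^-1|]ger0_norm ?invr_ge0 ?ler0n //.
have := ler_dist_dist u v; have := ler_dist_dist (u - 1) (v - 1).
rewrite (_ : u - 1 - (v - 1) = u - v); last by ring.
have := ler_normB (`|u| - `|v|) (`|u - 1| - `|v - 1|); lra.
Qed.

Lemma maxr_subr_le (x y r : R) : Num.max x r - Num.max y r <= `|x - y|.
Proof.
rewrite !maxEle; have := ler_norm (x - y); have := ler_norm (y - x); rewrite distrC.
by case: (lerP x r); case: (lerP y r) => ? ? ? ?; lra.
Qed.

Lemma exists_pos_lb (I : finType) (a : I -> R) : (forall i, 0 < a i) ->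
  exists2 d, 0 < d & forall i, d <= a i.
Proof.
move=> a_gt0; have sum_ge0 : 0 <= \sum_i (a i)^-1.
  by apply: sumr_ge0 => i _; rewrite invr_ge0 ltW.
exists (1 + \sum_i (a i)^-1)^-1 => [|i]; first by rewrite invr_gt0 ltr_pwDl.
rewrite -[a i]invrK lef_pV2 ?posrE ?invr_gt0 ?ltr_pwDl //.
rewrite (bigD1 i) //= addrCA lerDl addr_ge0 //.
by apply: sumr_ge0 => j _; rewrite invr_ge0 ltW.
Qed.

Lemma exists_lt_of_sum_lt (K : nat) (a : 'I_K -> R) (eta : R) :
  \sum_n a n < K%:R * eta -> exists n, a n < eta.
Proof.
move=> sum_lt; apply: contrapT => no_small.
suff : K%:R * eta <= \sum_n a n by rewrite leNgt sum_lt.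
rewrite mulr_natl -{1}(card_ord K) -sumr_const; apply: ler_sum => n _.
by rewrite leNgt; apply/negP => an; apply: no_small; exists n.
Qed.

Lemma ler_sum_term (I : finType) (a : I -> R) i : (forall j, 0 <= a j) ->
  a i <= \sum_j a j.
Proof.
by move=> a_ge0; rewrite (bigD1 i) //= lerDl sumr_ge0.
Qed.

End RealFacts.

Lemma infinite_set_inj_ord {T : choiceType} (A : set T) (p : T) (K : nat) :
  infinite_set A -> exists2 t : 'I_K -> T, forall n, A (t n) & injective t.
Proof.
move=> /(infinite_set_fset K) [B BA B_ge].
have ltB (n : 'I_K) : (n < size (finmap.enum_fset B))%N := leq_trans (ltn_ord n) B_ge.
exists (fun n => nth p (finmap.enum_fset B) n) => [n|n m /eqP].
  by apply: BA; apply: mem_nth.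
by rewrite nth_uniq ?finmap.fset_uniq // => /eqP/val_inj.
Qed.

Section Construction.
Context {R : realType} {M : metricType R} {X : normedModType R}.
Variables (t : M) (e : X) (r del : R).
Hypotheses (r_gt0 : 0 < r) (del_gt0 : 0 < del) (del_le1 : del <= 1)
  (e_unit : `|e| = 1).

Definition inner_radius := r * expR (- (2 / del)).
(* Small enough for the tent to fit into the slack del / 2 of the Lipschitz
   constant of [flatten y] (see [flatten_tent_lip_ordered]). *)
Definition tent_radius := del * inner_radius / 2.
Definition dist_floor z := Num.max (mdist t z) inner_radius.

(* The cut-off is 1 on the ball of radius [inner_radius] and 0 off the ball of
   radius [r]; in between it is affine in [ln (mdist t z)], which is what makes
   [cutoff_dist_le] hold. *)
Definition cutoff z := clamp01 (del / 2 * (ln r - ln (dist_floor z))).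

(* [flatten y] is (1 - del) ((1 - cutoff) y + cutoff y(t)): it agrees with
   (1 - del) y off the ball of radius r and is constant near t. *)
Definition flat_shift (y : M -> X) z := ((1 - del) * cutoff z) *: (y t - y z).
Definition flatten (y : M -> X) := (1 - del) *: y + flat_shift y.

Definition tent_height z := Num.max 0 (tent_radius - mdist t z).
Definition tent z := tent_height z *: e.

Lemma inner_radius_gt0 : 0 < inner_radius.
Proof. by rewrite mulr_gt0 // expR_gt0. Qed.

Lemma inner_radius_le : inner_radius <= r.
Proof.
apply: ler_piMr; first exact: ltW.
by rewrite expR_le1 oppr_le0 divr_ge0 // ltW.
Qed.

Lemma ln_inner_radius : ln inner_radius = ln r - 2 / del.
Proof. by rewrite lnM ?expRK // posrE expR_gt0. Qed.

Lemma tent_radius_gt0 : 0 < tent_radius.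
Proof. by rewrite divr_gt0 // mulr_gt0 // inner_radius_gt0. Qed.

Lemma tent_radius_le : tent_radius <= inner_radius.
Proof.
rewrite /tent_radius ler_pdivrMr // mulrC ler_pM2l ?inner_radius_gt0 //.
have := del_le1; lra.
Qed.

Lemma dist_floor_ge z : mdist t z <= dist_floor z.
Proof. by rewrite le_max lexx. Qed.

Lemma dist_floor_gt0 z : 0 < dist_floor z.
Proof. by rewrite lt_max inner_radius_gt0 orbT. Qed.

Lemma cutoff_ge0 z : 0 <= cutoff z. Proof. exact: clamp01_ge0. Qed.

Lemma cutoff_le1 z : cutoff z <= 1. Proof. exact: clamp01_le1. Qed.

Lemma cutoff_inner z : mdist t z <= inner_radius -> cutoff z = 1.
Proof.
move=> tz; rewrite /cutoff /dist_floor max_r // ln_inner_radius.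
rewrite (_ : del / 2 * (ln r - (ln r - 2 / del)) = 1) ?clamp01_ge1 //.
by field; rewrite gt_eqF.
Qed.

Lemma cutoff_outer z : r <= mdist t z -> cutoff z = 0.
Proof.
move=> tz; rewrite /cutoff /dist_floor max_l; last exact: le_trans inner_radius_le tz.
apply: clamp01_le0; rewrite pmulr_rle0 ?divr_gt0 // subr_le0.
by rewrite ler_ln // posrE //; apply: lt_le_trans tz.
Qed.

Lemma dist_center_lip a b : `|mdist t b - mdist t a| <= mdist a b.
Proof.
have := metric_triangle t a b; have := metric_triangle t b a.
by rewrite (metric_sym b a) ler_norml => ? ?; apply/andP; split; lra.
Qed.

Lemma cutoff_dist_le a b : dist_floor a <= dist_floor b ->
  `|cutoff a - cutoff b| * mdist t a <= del / 2 * mdist a b.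
Proof.
move=> ab; have a_gt0 := dist_floor_gt0 a; have b_gt0 := dist_floor_gt0 b.
set ma := dist_floor a in ab a_gt0 *; set mb := dist_floor b in ab b_gt0 *.
have del2_ge0 : 0 <= del / 2 by rewrite divr_ge0 // ltW.
have cut_ln : `|cutoff a - cutoff b| <= del / 2 * (ln mb - ln ma).
  apply: le_trans (clamp01_lip _ _) _.
  rewrite -mulrBr (_ : ln r - ln ma - (ln r - ln mb) = ln mb - ln ma); last by ring.
  by rewrite ger0_norm // mulr_ge0 // subr_ge0 ler_ln.
have ln_le : ln mb - ln ma <= (mb - ma) / ma.
  rewrite -ln_div ?posrE // (_ : mb / ma = 1 + (mb - ma) / ma); last first.
    by field; rewrite gt_eqF.
  apply: le_ln1Dx.
  by apply: lt_le_trans (_ : 0 <= _); rewrite ?oppr_lt0 // divr_ge0 ?subr_ge0 // ltW.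
have floor_lip : mb - ma <= mdist a b.
  exact: le_trans (maxr_subr_le _ _ _) (dist_center_lip a b).
apply: le_trans (_ : del / 2 * ((mb - ma) / ma) * ma <= _).
  apply: ler_pM; rewrite ?mdist_ge0 ?dist_floor_ge //.
  exact: le_trans cut_ln (ler_wpM2l del2_ge0 ln_le).
by rewrite -mulrA divfK ?gt_eqF // ler_wpM2l.
Qed.

Lemma dist_floor_wlog (F : M -> X) (C : R) :
  (forall a b, dist_floor a <= dist_floor b -> `|F a - F b| <= C * mdist a b) ->
  forall a b, `|F a - F b| <= C * mdist a b.
Proof.
move=> F_le a b; have [ab|/ltW ba] := leP (dist_floor a) (dist_floor b); first exact: F_le.
by rewrite distrC metric_sym F_le.
Qed.

Lemma flat_shift_sub y a b : flat_shift y a - flat_shift y b =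
  ((1 - del) * cutoff a - (1 - del) * cutoff b) *: (y t - y a) +
  ((1 - del) * cutoff b) *: (y b - y a).
Proof.
rewrite /flat_shift scalerBl -addrA; congr (_ + _).
by rewrite !scalerBr !opprB [RHS]addrC addrA subrK.
Qed.

Lemma flatten_sub y a b : flatten y a - flatten y b =
  ((1 - del) * cutoff a - (1 - del) * cutoff b) *: (y t - y a) +
  ((1 - del) * (1 - cutoff b)) *: (y a - y b).
Proof.
change ((1 - del) *: y a + flat_shift y a - ((1 - del) *: y b + flat_shift y b) =
  ((1 - del) * cutoff a - (1 - del) * cutoff b) *: (y t - y a) +
  ((1 - del) * (1 - cutoff b)) *: (y a - y b)).
rewrite opprD addrACA flat_shift_sub addrCA; congr (_ + _).
by rewrite -scalerBr mulrBr mulr1 [RHS]scalerBl -[in RHS]scalerN opprB.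
Qed.

Lemma tent_height_outer z : tent_radius <= mdist t z -> tent_height z = 0.
Proof. by move=> tz; rewrite /tent_height max_l // subr_le0. Qed.

Lemma tent_height_inner z : mdist t z <= tent_radius ->
  tent_height z = tent_radius - mdist t z.
Proof. by move=> tz; rewrite /tent_height max_r // subr_ge0. Qed.

Lemma tent_height_lip a b : `|tent_height a - tent_height b| <= mdist a b.
Proof.
have ab := maxr_subr_le (tent_radius - mdist t a) (tent_radius - mdist t b) 0.
have ba := maxr_subr_le (tent_radius - mdist t b) (tent_radius - mdist t a) 0.
rewrite (_ : _ - _ - (_ - _) = mdist t b - mdist t a) in ab; last by ring.
rewrite (_ : _ - _ - (_ - _) = - (mdist t b - mdist t a)) ?normrN in ba; last by ring.
have tab := dist_center_lip a b; rewrite /tent_height !(maxC 0) ler_norml.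
by apply/andP; split; lra.
Qed.

Lemma tent_sub a b : tent a - tent b = (tent_height a - tent_height b) *: e.
Proof. by rewrite /tent scalerBl. Qed.

Lemma tent_lip a b : `|tent a - tent b| <= mdist a b.
Proof. by rewrite tent_sub normrZ e_unit mulr1 tent_height_lip. Qed.

Lemma tent_outer_le z : tent_radius <= mdist t z -> tent z = 0.
Proof. by move=> tz; rewrite /tent tent_height_outer ?scale0r. Qed.

Lemma tent_outer z : r <= mdist t z -> tent z = 0.
Proof.
move=> tz; apply: tent_outer_le.
exact: le_trans tent_radius_le (le_trans inner_radius_le tz).
Qed.

Lemma flat_shift_outer y z : r <= mdist t z -> flat_shift y z = 0.
Proof. by move=> tz; rewrite /flat_shift cutoff_outer // mulr0 scale0r. Qed.

Lemma flatten_inner y z : mdist t z <= inner_radius -> flatten y z = (1 - del) *: y t.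
Proof.
move=> tz; change ((1 - del) *: y z + ((1 - del) * cutoff z) *: (y t - y z) =
  (1 - del) *: y t).
by rewrite cutoff_inner // mulr1 -scalerDr addrCA subrr addr0.
Qed.

Section OneLipschitz.
Variable y : M -> X.
Hypothesis y_lip : forall a b, `|y a - y b| <= mdist a b.

Lemma cutoff_term_le a b : dist_floor a <= dist_floor b ->
  `|((1 - del) * cutoff a - (1 - del) * cutoff b) *: (y t - y a)| <=
    (1 - del) * (del / 2) * mdist a b.
Proof.
move=> ab.
rewrite normrZ -mulrBr normrM ger0_norm ?subr_ge0 // -!mulrA (mulrA del).
apply: ler_wpM2l; first by rewrite subr_ge0.
apply: le_trans _ (cutoff_dist_le ab); apply: ler_wpM2l => //; exact: y_lip.
Qed.

Lemma flat_shift_lip a b : `|flat_shift y a - flat_shift y b| <= 2 * mdist a b.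
Proof.
move: a b; apply: dist_floor_wlog => a b ab.
rewrite flat_shift_sub; apply: le_trans (ler_normD _ _) _.
have d_ge0 := mdist_ge0 a b.
have c_ge0 : 0 <= (1 - del) * cutoff b by rewrite mulr_ge0 ?cutoff_ge0 ?subr_ge0.
have c_le1 : (1 - del) * cutoff b <= 1.
  by apply: mulr_ile1; rewrite ?cutoff_ge0 ?cutoff_le1 ?subr_ge0 // lerBlDr lerDl ltW.
have second : `|((1 - del) * cutoff b) *: (y b - y a)| <= mdist a b.
  rewrite normrZ ger0_norm // metric_sym.
  exact: le_trans (ler_piMl (normr_ge0 _) c_le1) (y_lip b a).
have coef : (1 - del) * (del / 2) <= 1.
  by apply: mulr_ile1; have := del_gt0; have := del_le1; lra.
have := cutoff_term_le ab; have := ler_wpM2r d_ge0 coef; lra.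
Qed.

Lemma flatten_lip a b : `|flatten y a - flatten y b| <= (1 - del / 2) * mdist a b.
Proof.
move: a b; apply: dist_floor_wlog => a b ab.
rewrite flatten_sub; apply: le_trans (ler_normD _ _) _.
have d_ge0 := mdist_ge0 a b.
have second : `|((1 - del) * (1 - cutoff b)) *: (y a - y b)| <= (1 - del) * mdist a b.
  rewrite normrZ ger0_norm; last by rewrite mulr_ge0 ?subr_ge0 ?cutoff_le1.
  rewrite -mulrA ler_wpM2l ?subr_ge0 //.
  apply: le_trans (y_lip a b); apply: ler_piMl => //.
  by rewrite lerBlDr lerDl cutoff_ge0.
have coef : (1 - del) * (del / 2) + (1 - del) <= 1 - del / 2.
  by have := mulr_ge0 (ltW del_gt0) (ltW del_gt0); have := del_le1; nra.
have := cutoff_term_le ab; have := ler_wpM2r d_ge0 coef; rewrite mulrDl; lra.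
Qed.

Lemma flatten_tent_lip_ordered (sg : R) a b : `|sg| <= 1 -> mdist t a <= mdist t b ->
  `|(flatten y a + sg *: tent a) - (flatten y b + sg *: tent b)| <= mdist a b.
Proof.
move=> sg1 ab; rewrite opprD addrACA -scalerBr.
have d_ge0 := mdist_ge0 a b.
have [b_in|b_out] := leP (mdist t b) inner_radius.
  rewrite !flatten_inner //; last exact: le_trans ab b_in.
  by rewrite subrr add0r normrZ (le_trans (ler_piMl _ sg1) (tent_lip a b)).
rewrite (tent_outer_le (ltW (le_lt_trans tent_radius_le b_out))) subr0.
have [a_out|a_in] := leP tent_radius (mdist t a).
  rewrite (tent_outer_le a_out) scaler0 addr0; apply: le_trans (flatten_lip a b) _.
  by apply: ler_piMl => //; have := del_gt0; lra.
rewrite (_ : flatten y a = flatten y t); last first.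
  by rewrite !flatten_inner ?mdistxx ?(ltW inner_radius_gt0) ?(le_trans (ltW a_in) tent_radius_le).
apply: le_trans (ler_normD _ _) _.
have ta_ge0 := mdist_ge0 t a.
have tent_a : `|sg *: tent a| <= tent_radius - mdist t a.
  rewrite normrZ /tent normrZ e_unit mulr1 tent_height_inner ?(ltW a_in) //.
  rewrite [`|_ - _|]ger0_norm ?subr_ge0 ?(ltW a_in) //.
  by apply: ler_piMl; rewrite // subr_ge0 ltW.
have tb := metric_triangle t a b.
have del2_ge0 : 0 <= del / 2 by rewrite divr_ge0 // ltW.
have flat_tb := ler_wpM2l (_ : 0 <= 1 - del / 2) tb.
have inner_tb := ler_wpM2l del2_ge0 (le_trans (ltW b_out) tb).
have := flatten_lip t b; move: flat_tb inner_tb tent_a.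
by rewrite /tent_radius !mulrDr; have := del_gt0; have := del_le1; lra.
Qed.

Lemma flatten_tent_lip (sg : R) a b : `|sg| <= 1 ->
  `|(flatten y a + sg *: tent a) - (flatten y b + sg *: tent b)| <= mdist a b.
Proof.
move=> sg1; have [ab|/ltW ba] := leP (mdist t a) (mdist t b).
  exact: flatten_tent_lip_ordered.
by rewrite distrC metric_sym flatten_tent_lip_ordered.
Qed.

End OneLipschitz.

Lemma tent_norm_ge1 : cluster_points M t -> 1 <= lip_norm tent.
Proof.
move=> /(_ _ tent_radius_gt0) [a [/negbTE at_ ta]].
have t_a : t != a by rewrite eq_sym at_.
have tent_lipschitz : lipschitz_map tent by exists 1 => u v; rewrite mul1r tent_lip.
apply: le_trans (lip_ratio_le_norm tent_lipschitz t_a).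
rewrite tent_sub normrZ e_unit mulr1 !tent_height_inner ?mdistxx ?(ltW ta) //;
  last exact: ltW tent_radius_gt0.
rewrite subr0 opprB addrCA subrr addr0 ger0_norm ?mdist_ge0 //.
by rewrite divff // gt_eqF // mdist_gt0.
Qed.

Variable x0 : M.
Hypothesis t_far : r <= mdist t x0.
Local Notation Z := (Lip0 (X := X) x0).
Local Notation ball := (sub_ball Z lip_norm).

Lemma Lip0_tent : Z tent.
Proof. by split; [exists 1 => a b; rewrite mul1r tent_lip | exact: tent_outer]. Qed.

Lemma tent_ball : ball tent.
Proof. exact: lip1_ball Lip0_tent tent_lip. Qed.

Lemma Lip0_flat_shift y : (forall a b, `|y a - y b| <= mdist a b) -> Z (flat_shift y).
Proof.
by move=> y_lip; split; [exists 2; exact: flat_shift_lip | exact: flat_shift_outer].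
Qed.

Lemma Lip0_flatten y : ball y -> Z (flatten y).
Proof.
move=> y_ball; have := Lip0_lin (1 - del) 1 y_ball.1 (Lip0_flat_shift (ball_lip1 y_ball)).
by rewrite scale1r.
Qed.

Lemma flatten_tent_ball y sg : ball y -> `|sg| <= 1 -> ball (flatten y + sg *: tent).
Proof.
move=> y_ball sg1; have := Lip0_lin 1 sg (Lip0_flatten y_ball) Lip0_tent.
rewrite scale1r => Zsum; apply: lip1_ball Zsum _.
by move=> a b; apply: flatten_tent_lip (ball_lip1 y_ball) _ _ _ sg1.
Qed.

Lemma flatten_tent_slice (f : (M -> X) -> R) alpha y sg :
  sub_dual Z lip_norm f -> sub_dual_norm Z lip_norm f = 1 -> del <= alpha / 4 ->
  ball y -> 1 - alpha / 2 < f y -> `|f (flat_shift y)| + `|f tent| < del ->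
  `|sg| <= 1 -> slice Z lip_norm f alpha (flatten y + sg *: tent).
Proof.
move=> f_dual f1 del_alpha y_ball fy quiet sg1.
split; first exact: flatten_tent_ball.
have := f_dual.1 1 sg _ _ (Lip0_flatten y_ball) Lip0_tent.
rewrite scale1r mul1r => ->.
have := f_dual.1 (1 - del) 1 _ _ y_ball.1 (Lip0_flat_shift (ball_lip1 y_ball)).
rewrite scale1r mul1r => /= flattenE; rewrite [f (flatten y)]flattenE.
have fy_le1 : f y <= 1 by rewrite -f1 dual_le_norm.
have del_fy := ler_wpM2l (ltW del_gt0) fy_le1.
have shift_ge := ler_norm (- f (flat_shift y)); rewrite normrN in shift_ge.
have tent_ge : - (sg * f tent) <= `|f tent|.
  apply: le_trans (ler_norm _) _.
  by rewrite normrN normrM; apply: ler_piMl.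
rewrite mulrBl mul1r; lra.
Qed.

End Construction.

Lemma exists_separation_radius {R : realType} {M : metricType R} (x0 : M) (K : nat)
    (t : 'I_K -> M) :
  injective t -> (forall n, t n != x0) ->
  exists r, [/\ 0 < r, forall n, r <= mdist (t n) x0 &
    forall n m, n != m -> 2 * r <= mdist (t n) (t m)].
Proof.
move=> t_inj t_x0.
pose a (nm : 'I_K * 'I_K) :=
  if nm.1 == nm.2 then mdist (t nm.1) x0 else mdist (t nm.1) (t nm.2) / 2.
have [|r r_gt0 r_le] := @exists_pos_lb R _ a.
  move=> [n m]; rewrite /a /=; case: eqP => [_|nm]; first by rewrite mdist_gt0.
  by rewrite divr_gt0 // mdist_gt0; apply/eqP => /t_inj.
exists r; split => // [n|n m nm].
  by have := r_le (n, n); rewrite /a /= eqxx.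
by have := r_le (n, m); rewrite /a /= (negbTE nm) ler_pdivlMr // mulrC.
Qed.

(* Over K separated points, f i sees the 2-Lipschitz shifts and the 1-Lipschitz
   tents with total weight at most C_i (2 * 2 + 2 * 1); K is chosen so that
   this forces a point where all are < del. *)
Lemma exists_quiet_point {R : realType} {M : metricType R} {X : normedModType R}
    (x0 : M) (e : X) (del : R) (k : nat) (f : 'I_k -> (M -> X) -> R)
    (y : 'I_k -> M -> X) :
  infinite_set (cluster_points M) -> `|e| = 1 -> 0 < del -> del <= 1 ->
  (forall i, sub_dual (Lip0 x0) lip_norm (f i)) ->
  (forall i a b, `|y i a - y i b| <= mdist a b) ->
  exists t r, [/\ cluster_points M t, 0 < r, r <= mdist t x0 &
    forall i, `|f i (flat_shift t r del (y i))| + `|f i (tent t e r del)| < del].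
Proof.
move=> cl_inf e_unit del_gt0 del_le1 f_dual y_lip.
have [C /all_and2 [C_ge0 fC]] := choice (fun i => dual_disjoint_sum_le (f_dual i)).
pose T := \sum_i C i * 6; pose K := (Num.truncn (T / del)).+1.
have KT : T < K%:R * del by rewrite -ltr_pdivrMr // truncnS_gt.
have [t t_cl t_inj] := infinite_set_inj_ord x0 K
  (infinite_setD cl_inf (finite_set1 x0)).
have [r [r_gt0 t_far t_sep]] :=
  exists_separation_radius t_inj (fun n => introN eqP (t_cl n).2).
pose noise i n := `|f i (flat_shift (t n) r del (y i))| + `|f i (tent (t n) e r del)|.
have [n n_quiet] : exists n, \sum_i noise i n < del.
  apply: exists_lt_of_sum_lt; apply: le_lt_trans KT.
  rewrite exchange_big; apply: ler_sum => i _; rewrite big_split /=.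
  rewrite (_ : C i * 6 = C i * (2 * 2) + C i * (2 * 1)); last by ring.
  apply: lerD; apply: (fC i) t_sep _ _ _ => //.
  - by move=> n z; apply: flat_shift_outer.
  - by move=> n a b; apply: flat_shift_lip.
  - by move=> n; apply: Lip0_flat_shift.
  - by move=> n z; apply: tent_outer.
  - by move=> n a b; rewrite mul1r tent_lip.
  - by move=> n; apply: Lip0_tent.
exists (t n), r; split => //; first by have [] := t_cl n.
move=> i; apply: le_lt_trans n_quiet; rewrite -/(noise i n).
by apply: (ler_sum_term (a := noise^~ n)) => j; rewrite addr_ge0.
Qed.

Theorem theorem4p5 (R : realType) (M : metricType R) (x0 : M)
  (X : completeNormedModType R) :
  infinite_set (cluster_points M) ->
  (exists x : X, x != 0) ->
  SSD2P (Lip0 (X := X) x0) lip_norm.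
Proof.
move=> cl_inf [e0 e0_neq0] k f alpha eps f_dual alpha_gt0 eps_gt0.
pose e := `|e0|^-1 *: e0.
have e_unit : `|e| = 1.
  by rewrite normrZ ger0_norm ?invr_ge0 // mulVf // normr_eq0.
have [del del_gt0 del_le] : exists2 del, 0 < del & forall o : option 'I_k,
    del <= if o is Some i then alpha i / 4 else 1.
  by apply: exists_pos_lb => -[i|] //; rewrite divr_gt0.
have del_le1 : del <= 1 := del_le None.
have [y /all_and2 [y_ball fy]] := choice (fun i =>
  dual_norming (f_dual i).1 (f_dual i).2 (divr_gt0 (alpha_gt0 i) (ltr0n _ 2))).
have [t [r [t_cl r_gt0 t_far quiet]]] := exists_quiet_point cl_inf e_unit del_gt0
  del_le1 (fun i => (f_dual i).1) (fun i => ball_lip1 (y_ball i)).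
have slice_at i sg : `|sg| <= 1 ->
    slice (Lip0 x0) lip_norm (f i) (alpha i) (flatten t r del (y i) + sg *: tent t e r del).
  apply: (flatten_tent_slice r_gt0 del_gt0 del_le1 e_unit t_far
    (f_dual i).1 (f_dual i).2 (del_le (Some i)) (y_ball i) (fy i) (quiet i)).
exists (fun i => flatten t r del (y i)), (tent t e r del); split.
- by move=> i; have := slice_at i 0; rewrite normr0 scale0r addr0; apply.
- exact: (tent_ball r_gt0 del_gt0 del_le1 e_unit t_far).
- by apply: lt_le_trans (tent_norm_ge1 r_gt0 del_gt0 e_unit t_cl); lra.
- move=> i; split; first by have := slice_at i 1; rewrite normr1 scale1r; apply.
  by have := slice_at i (-1); rewrite normrN normr1 scaleN1r; apply.
Qed.
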